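(* Let $n,m\in\mathbb{N}_0$. Then $L_n^{(m)}(1)=0$ if and only if $n=1$ and $m=0$.
   Context: Generalized Laguerre polynomials: $L_n^{(\alpha)}(x)=\sum_{j=0}^n(-1)^j\binom{n+\alpha}{n-j}\frac{x^j}{j!}$. *)

From mathcomp Require Import all_boot all_algebra.
Set Implicit Arguments. Unset Strict Implicit. Unset Printing Implicit Defensive.
Import GRing.Theory Num.Theory.
Local Open Scope ring_scope.

Definition laguerre (n m : nat) (x : rat) : rat :=
  \sum_(0 <= j < n.+1) (-1) ^+ j * ('C(n + m, n - j))%:R * x ^+ j / (j`!)%:R.

From mathcomp Require Import all_boot all_algebra ring.
Import GRing.Theory Num.Theory.
Local Open Scope ring_scope.

(* Clearing denominators, [n! L_n^(m)(x)] has the integer coefficients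
   [(-1)^j C(n+m, n-j) n!/j!], and [n!/j! = n^_(n-j)] is a multiple of [n]
   for every [j < n].  At [x = 1] this makes [n! L_n^(m)(1)] congruent to the
   top coefficient [(-1)^n] modulo [n], so it cannot vanish once [n >= 2].
   The cases [L_0^(m)(1) = 1] and [L_1^(m)(1) = m] are computed directly. *)

Definition laguerre_fact_coef (n m j : nat) : int :=
  (-1) ^+ j * ('C(n + m, n - j) * n ^_ (n - j))%:Z.

Lemma laguerre_fact (n m : nat) (x : rat) :
  n`!%:R * laguerre n m x =
  \sum_(0 <= j < n.+1) (laguerre_fact_coef n m j)%:~R * x ^+ j.
Proof.
rewrite /laguerre big_distrr; apply: eq_big_nat => j /andP[_].
rewrite ltnS => le_jn.
have fact_n : (n`! = n ^_ (n - j) * j`!)%N.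
  by rewrite -{2}(subKn le_jn) ffact_fact ?leq_subr.
have fact_j_neq0 : j`!%:R != 0 :> rat by rewrite pnatr_eq0 -lt0n fact_gt0.
rewrite /laguerre_fact_coef rmorphM rmorph_sign /= -pmulrn fact_n !natrM.
by field.
Qed.

Lemma dvdn_ffact (n k : nat) : (0 < k)%N -> (n %| n ^_ k)%N.
Proof. by case: k => // k _; rewrite ffactnS dvdn_mulr. Qed.

Lemma dvdz_laguerre_fact_coef (n m j : nat) :
  (j < n)%N -> (n %| laguerre_fact_coef n m j)%Z.
Proof.
move=> lt_jn; rewrite /laguerre_fact_coef dvdz_mull // dvdzE /=.
by rewrite dvdn_mull // dvdn_ffact ?subn_gt0.
Qed.

Lemma laguerre_fact_coef_top (n m : nat) : laguerre_fact_coef n m n = (-1) ^+ n.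
Proof. by rewrite /laguerre_fact_coef subnn bin0 ffactn0 mulr1. Qed.

Lemma dvdz_laguerre_fact_sub_sign (n m : nat) :
  (n %| \sum_(0 <= j < n.+1) laguerre_fact_coef n m j - (-1) ^+ n)%Z.
Proof.
rewrite big_nat_recr //= laguerre_fact_coef_top addrK.
rewrite big_seq; apply: rpred_sum => j; rewrite mem_index_iota => /andP[_ lt_jn].
exact: dvdz_laguerre_fact_coef.
Qed.

Lemma laguerre_at1_neq0 (n m : nat) : (1 < n)%N -> laguerre n m 1 != 0.
Proof.
move=> lt1n; apply: contraTneq lt1n => L_eq0.
have : n`!%:R * laguerre n m 1 = 0 by rewrite L_eq0 mulr0.
rewrite laguerre_fact; under eq_bigr do rewrite expr1n mulr1.
rewrite -rmorph_sum /= => /eqP; rewrite intr_eq0 => /eqP sum_eq0.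
have := dvdz_laguerre_fact_sub_sign n m.
by rewrite sum_eq0 sub0r rpredN dvdzE abszX /= exp1n dvdn1 => /eqP ->.
Qed.

Lemma laguerre0 (m : nat) (x : rat) : laguerre 0 m x = 1.
Proof. by rewrite /laguerre big_nat1 bin0 expr0 mulr1 divr1. Qed.

Lemma laguerre1 (m : nat) (x : rat) : laguerre 1 m x = m.+1%:R - x.
Proof.
rewrite /laguerre big_nat_recr // big_nat1 subn0 subnn add1n bin1 bin0.
by rewrite /= !expr0 !expr1 invr1 !mulr1 !mul1r mulN1r.
Qed.

Theorem proposition2 (n m : nat) :
  laguerre n m 1 = 0 <-> (n = 1%N /\ m = 0%N).
Proof.
case: n => [|[|n]].
- by rewrite laguerre0; split=> [/eqP|[]//]; rewrite oner_eq0.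
- rewrite laguerre1 -addn1 natrD addrK.
  by split=> [/eqP|[_ ->]//]; rewrite pnatr_eq0 => /eqP.
- by split=> [/eqP|[]//]; rewrite (negPf (laguerre_at1_neq0 n.+2 m isT)).
Qed.
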